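(* Let $(A,L',L'')$ be an almost twilled Lie-Rinehart algebra with $L'$ and $L''$ finitely generated and projective as $A$-modules. Then $(A,L',L'')$ is a twilled Lie-Rinehart algebra if and only if $(A,L,D)=(A,L'\ltimes(L'')^*,L''\ltimes(L')^* )$ is a Lie-Rinehart bialgebra.
   Context: $R$ commutative ring (with $2,3$ invertible), $A$ commutative $R$-algebra. Lie-Rinehart algebra $(A,L)$: $R$-Lie algebra and $A$-module with Lie morphism $L\to\mathrm{Der}_R(A)$ satisfying $(a\alpha)(b)=a\,\alpha(b)$, $[\alpha,a\beta]=\alpha(a)\beta+a[\alpha,\beta]$. Left $(A,L)$-module: $A$-module with left $L$-module structure, $(a\alpha)\cdot m=a(\alpha\cdot m)$, $\alpha\cdot(am)=\alpha(a)m+a(\alpha\cdot m)$. Almost twilled Lie-Rinehart algebra $(A,L',L'')$: Lie-Rinehart algebras $(A,L')$, $(A,L'')$ (brackets $[\cdot,\cdot]',[\cdot,\cdot]''$), a left $(A,L')$-module structure $x\cdot\xi$ on $L''$, a left $(A,L'')$-module structure $\xi\cdot x$ on $L'$; twilled if $L'\oplus L''$ with bracket $[(x,\xi),(y,\eta)]=([x,y]'+\xi\cdot y-\eta\cdot x,[\xi,\eta]''+x\cdot\eta-y\cdot\xi)$ and action $(x,\xi)(a)=x(a)+\xi(a)$ is a Lie-Rinehart algebra. $(L'')^*=\mathrm{Hom}_A(L'',A)$ is a left $(A,L')$-module via $(x\cdot\phi)(\xi)=x(\phi(\xi))-\phi(x\cdot\xi)$; $L'\ltimes(L'')^*$ is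 $L'\oplus(L'')^*$ with bracket $[(x,\phi),(y,\psi)]=([x,y]',x\cdot\psi-y\cdot\phi)$ and action $(x,\phi)(a)=x(a)$; $L''\ltimes(L')^*$ analogously. Lie-Rinehart bialgebra: $(A,L,D)$ with $L,D$ finitely generated projective $(R,A)$-Lie algebras, $D\cong\mathrm{Hom}_A(L,A)$, such that $d_*[x,y]=[d_*x,y]+[x,d_*y]$ for $x,y\in L$, where $d_*$ is the Lie-Rinehart differential on $\mathrm{Alt}_A(D,A)\cong\Lambda_AL$ (formula $(df)(\alpha_1,..,\alpha_n)=(-1)^n[\sum_i(-1)^{i-1}\alpha_i(f(..\widehat{\alpha_i}..))+\sum_{j<k}(-1)^{j+k}f([\alpha_j,\alpha_k],..)]$ for $D$) and $[\cdot,\cdot]$ the Gerstenhaber bracket on $\Lambda_AL$ induced by the Lie-Rinehart structure of $L$. *)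

From HB Require Import structures.
From mathcomp Require Import all_boot all_order all_algebra.
From Stdlib Require Import ClassicalEpsilon.
Set Implicit Arguments. Unset Strict Implicit. Unset Printing Implicit Defensive.
Import GRing.Theory.
Local Open Scope ring_scope.

(* Elements of a module are handled through a carrier type [X], a membership
   predicate [mem] (to carve out e.g. Hom_A(M,A) inside M -> A) and explicit
   module operations. *)
Record modops (A X : Type) := MOps {
  madd : X -> X -> X; mzero : X; mopp : X -> X; mscale : A -> X -> X }.

Section Generic.
Variables (R : comNzRingType) (A : comAlgType R).

Definition lmod_ops (M : lmodType A) : modops A M := MOps +%R 0 -%R *:%R.

Definition is_Amodule (X : Type) (mem : X -> Prop) (o : modops A X) : Prop :=
  [/\ [/\ mem (mzero o),
      (forall x y, mem x -> mem y -> mem (madd o x y)),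
      (forall x, mem x -> mem (mopp o x)) &
      (forall a x, mem x -> mem (mscale o a x))],
      (forall x y z, mem x -> mem y -> mem z ->
          madd o x (madd o y z) = madd o (madd o x y) z),
      (forall x y, mem x -> mem y -> madd o x y = madd o y x),
      [/\ (forall x, mem x -> madd o (mzero o) x = x) &
          (forall x, mem x -> madd o (mopp o x) x = mzero o)] &
      [/\ (forall a b x, mem x -> mscale o a (mscale o b x) = mscale o (a * b) x),
          (forall x, mem x -> mscale o 1 x = x),
          (forall a x y, mem x -> mem y ->
              mscale o a (madd o x y) = madd o (mscale o a x) (mscale o a y)) &
          (forall a b x, mem x ->
              mscale o (a + b) x = madd o (mscale o a x) (mscale o b x))]].

Definition is_LieRinehart (X : Type) (mem : X -> Prop) (o : modops A X)
    (br : X -> X -> X) (anc : X -> A -> A) : Prop :=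
  [/\ is_Amodule mem o,
      (forall x y, mem x -> mem y -> mem (br x y)),
      [/\
      (forall x y z, mem x -> mem y -> mem z ->
          br (madd o x y) z = madd o (br x z) (br y z) /\
          br z (madd o x y) = madd o (br z x) (br z y)) &
      (forall (r : R) x y, mem x -> mem y ->
          br (mscale o r%:A x) y = mscale o r%:A (br x y) /\
          br x (mscale o r%:A y) = mscale o r%:A (br x y))],
      [/\
      (forall x, mem x -> br x x = mzero o),
      (forall x y z, mem x -> mem y -> mem z ->
          madd o (br x (br y z)) (madd o (br y (br z x)) (br z (br x y)))
          = mzero o) &
      (forall x, mem x ->
          [/\ (forall a b, anc x (a + b) = anc x a + anc x b),
              (forall (r : R) a, anc x (r *: a) = r *: anc x a) &
              (forall a b, anc x (a * b) = a * anc x b + anc x a * b)])] &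
      [/\ (forall x y a, mem x -> mem y -> anc (madd o x y) a = anc x a + anc y a),
          (forall b x a, mem x -> anc (mscale o b x) a = b * anc x a),
          (forall x y a, mem x -> mem y ->
              anc (br x y) a = anc x (anc y a) - anc y (anc x a)) &
          (forall x y a, mem x -> mem y ->
              br x (mscale o a y) = madd o (mscale o (anc x a) y) (mscale o a (br x y)))]].

Definition is_LRmodule (X : Type) (memL : X -> Prop) (oL : modops A X)
    (brL : X -> X -> X) (ancL : X -> A -> A)
    (M : Type) (memM : M -> Prop) (oM : modops A M) (act : X -> M -> M) : Prop :=
  [/\ is_Amodule memM oM,
      (forall x m, memL x -> memM m -> memM (act x m)),
      [/\
      (forall x y m, memL x -> memL y -> memM m ->
          act (madd oL x y) m = madd oM (act x m) (act y m)),
      (forall x m n, memL x -> memM m -> memM n ->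
          act x (madd oM m n) = madd oM (act x m) (act x n)) &
      (forall x y m, memL x -> memL y -> memM m ->
          act (brL x y) m = madd oM (act x (act y m)) (mopp oM (act y (act x m))))],
      (forall a x m, memL x -> memM m -> act (mscale oL a x) m = mscale oM a (act x m)) &
      (forall a x m, memL x -> memM m ->
          act x (mscale oM a m) = madd oM (mscale oM (ancL x a) m) (mscale oM a (act x m)))].

(* finitely generated projective: a retract of a free module A^n *)
Definition is_fgp (X : Type) (mem : X -> Prop) (o : modops A X) : Prop :=
  exists (n : nat) (s : X -> 'rV[A]_n) (r : 'rV[A]_n -> X),
    [/\ (forall v, mem (r v)),
        (forall a x y, mem x -> mem y -> s (madd o (mscale o a x) y) = a *: s x + s y),
        (forall a v w, r (a *: v + w) = madd o (mscale o a (r v)) (r w)) &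
        (forall x, mem x -> r (s x) = x)].

(* [pr] identifies D with Hom_A(L, A) (A-module isomorphism) *)
Definition is_dual_pairing (XL : Type) (memL : XL -> Prop) (oL : modops A XL)
    (XD : Type) (memD : XD -> Prop) (oD : modops A XD) (pr : XD -> XL -> A) : Prop :=
  [/\ (forall al a x y, memD al -> memL x -> memL y ->
          pr al (madd oL (mscale oL a x) y) = a * pr al x + pr al y),
      (forall al be a x, memD al -> memD be -> memL x ->
          pr (madd oD (mscale oD a al) be) x = a * pr al x + pr be x),
      (forall al be, memD al -> memD be ->
          (forall x, memL x -> pr al x = pr be x) -> al = be) &
      (forall f : XL -> A,
          (forall a x y, memL x -> memL y -> f (madd oL (mscale oL a x) y) = a * f x + f y) ->
          exists2 al, memD al & forall x, memL x -> pr al x = f x)].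

(* Lie-Rinehart differential d_* : L = Alt^1_A(D,A) -> Alt^2_A(D,A),
   x seen as the 1-form al |-> <al, x>; sign (-1)^n with n = 2. *)
Definition dstar (XL XD : Type) (brD : XD -> XD -> XD) (ancD : XD -> A -> A)
    (pr : XD -> XL -> A) (x : XL) : XD -> XD -> A :=
  fun al be => ancD al (pr be x) - ancD be (pr al x) - pr (brD al be) x.

Definition coad (XL XD : Type) (memL : XL -> Prop) (memD : XD -> Prop)
    (brL : XL -> XL -> XL) (ancL : XL -> A -> A) (pr : XD -> XL -> A)
    (y : XL) (al : XD) : XD :=
  epsilon (inhabits al) (fun ga => memD ga /\
     forall x, memL x -> pr ga x = ancL y (pr al x) - pr al (brL y x)).

(* Gerstenhaber bracket [y, w] of y in L with w in Lambda^2_A L = Alt^2_A(D,A)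
   (the Lie derivative along y); note [w, y] = - [y, w]. *)
Definition gbr1 (XL XD : Type) (memL : XL -> Prop) (memD : XD -> Prop)
    (brL : XL -> XL -> XL) (ancL : XL -> A -> A) (pr : XD -> XL -> A)
    (y : XL) (w : XD -> XD -> A) : XD -> XD -> A :=
  fun al be => ancL y (w al be)
    - w (coad memL memD brL ancL pr y al) be
    - w al (coad memL memD brL ancL pr y be).

Definition is_LR_bialgebra
    (XL : Type) (memL : XL -> Prop) (oL : modops A XL)
    (brL : XL -> XL -> XL) (ancL : XL -> A -> A)
    (XD : Type) (memD : XD -> Prop) (oD : modops A XD)
    (brD : XD -> XD -> XD) (ancD : XD -> A -> A) (pr : XD -> XL -> A) : Prop :=
  [/\ is_LieRinehart memL oL brL ancL, is_LieRinehart memD oD brD ancD,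
      is_fgp memL oL /\ is_fgp memD oD, is_dual_pairing memL oL memD oD pr &
      forall x y, memL x -> memL y -> forall al be, memD al -> memD be ->
        dstar brD ancD pr (brL x y) al be
        = - gbr1 memL memD brL ancL pr y (dstar brD ancD pr x) al be
          + gbr1 memL memD brL ancL pr x (dstar brD ancD pr y) al be].

Variables (L1 L2 : lmodType A).

Definition memT (X : Type) : X -> Prop := fun _ => True.

Definition almost_twilled (br1 : L1 -> L1 -> L1) (anc1 : L1 -> A -> A)
    (br2 : L2 -> L2 -> L2) (anc2 : L2 -> A -> A)
    (act1 : L1 -> L2 -> L2) (act2 : L2 -> L1 -> L1) : Prop :=
  [/\ is_LieRinehart (@memT L1) (lmod_ops L1) br1 anc1,
      is_LieRinehart (@memT L2) (lmod_ops L2) br2 anc2,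
      is_LRmodule (@memT L1) (lmod_ops L1) br1 anc1 (@memT L2) (lmod_ops L2) act1 &
      is_LRmodule (@memT L2) (lmod_ops L2) br2 anc2 (@memT L1) (lmod_ops L1) act2].

Definition sum_ops : modops A (L1 * L2) :=
  MOps (fun u v => (u.1 + v.1, u.2 + v.2)) (0, 0) (fun u => (- u.1, - u.2))
       (fun a u => (a *: u.1, a *: u.2)).

Definition twilled (br1 : L1 -> L1 -> L1) (anc1 : L1 -> A -> A)
    (br2 : L2 -> L2 -> L2) (anc2 : L2 -> A -> A)
    (act1 : L1 -> L2 -> L2) (act2 : L2 -> L1 -> L1) : Prop :=
  is_LieRinehart (@memT (L1 * L2)) sum_ops
    (fun u v => (br1 u.1 v.1 + act2 u.2 v.1 - act2 v.2 u.1,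
                 br2 u.2 v.2 + act1 u.1 v.2 - act1 v.1 u.2))
    (fun u a => anc1 u.1 a + anc2 u.2 a).
End Generic.

(* Semidirect product  M |x (N)^*  where N^* = Hom_A(N, A), given the
   Lie-Rinehart structure (brM, ancM) on M and a left (A,M)-module structure
   [act] on N; the carrier is M * (N -> A) restricted to A-linear functionals. *)
Section Semidirect.
Variables (R : comNzRingType) (A : comAlgType R) (M N : lmodType A).

Definition is_Alin (f : N -> A) : Prop :=
  forall a x y, f (a *: x + y) = a * f x + f y.

Definition sd_mem : M * (N -> A) -> Prop := fun u => is_Alin u.2.

Definition sd_ops : modops A (M * (N -> A)) :=
  MOps (fun u v => (u.1 + v.1, fun n => u.2 n + v.2 n)) (0, fun _ => 0)
       (fun u => (- u.1, fun n => - u.2 n)) (fun a u => (a *: u.1, fun n => a * u.2 n)).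

Definition dual_act (ancM : M -> A -> A) (act : M -> N -> N)
    (x : M) (phi : N -> A) : N -> A :=
  fun n => ancM x (phi n) - phi (act x n).

Definition sd_br (brM : M -> M -> M) (ancM : M -> A -> A) (act : M -> N -> N)
    (u v : M * (N -> A)) : M * (N -> A) :=
  (brM u.1 v.1, fun n => dual_act ancM act u.1 v.2 n - dual_act ancM act v.1 u.2 n).

Definition sd_anc (ancM : M -> A -> A) (u : M * (N -> A)) (a : A) : A := ancM u.1 a.
End Semidirect.

Definition sd_pairing (R : comNzRingType) (A : comAlgType R) (L1 L2 : lmodType A)
    (al : L2 * (L1 -> A)) (u : L1 * (L2 -> A)) : A := al.2 u.1 + u.2 al.1.

From HB Require Import structures.
From mathcomp Require Import all_boot all_order all_algebra.
From mathcomp Require Import ring.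
From Stdlib Require Import ClassicalEpsilon FunctionalExtensionality.
Set Implicit Arguments. Unset Strict Implicit. Unset Printing Implicit Defensive.
Import GRing.Theory.
Local Open Scope ring_scope.

(* Put L = L1 |x L2^* and D = L2 |x L1^*. In an almost twilled algebra every
   Lie-Rinehart axiom of L1 (+) L2 holds except possibly three mixed ones: the
   vanishing of the L1-part J1(x, y, xi) of the Jacobiator of (x, y, xi), of the
   L2-part J2(xi, eta, x) of that of (xi, eta, x), and of the defect
   Delta(x, xi) of the anchor being a Lie morphism on [x, xi].
   Computing the coadjoint action of L on D explicitly, the bialgebra
   compatibility defect at X = (x, phi), Y = (y, chi), al = (xi, psi),
   be = (eta, om) turns out to be
     om (J1 x y xi) - psi (J1 x y eta) + K x chi xi eta - K y phi xi eta,
   where K x chi xi eta = chi (J2 xi eta x) + Delta(x, eta)(chi xi)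
   - Delta(x, xi)(chi eta). So twilled implies bialgebra. Conversely, zero
   components isolate om (J1 x y xi) and K x chi xi eta; L1 and L2 being f.g.
   projective, they are separated by linear forms, whence J1 = 0; since
   J1 x (b y) xi - b J1 x y xi = - Delta(x, xi)(b) y, this forces Delta = 0,
   and then K = chi (J2 ...) forces J2 = 0. *)

Ltac funext := let n := fresh "n" in apply: functional_extensionality => n.

Lemma addr_self_eq0 (V : zmodType) (a : V) : a + a = a -> a = 0.
Proof. by move/eqP; rewrite -subr_eq0 addrK => /eqP. Qed.

Section LieRinehartTheory.
Variables (R : comNzRingType) (A : comAlgType R) (L : lmodType A)
  (br : L -> L -> L) (anc : L -> A -> A).
Hypothesis HL : is_LieRinehart (@memT L) (lmod_ops L) br anc.

Lemma LR_brDl x y z : br (x + y) z = br x z + br y z.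
Proof. by case: HL => _ _ [H _] _ _; case: (H x y z I I I). Qed.
Lemma LR_brDr x y z : br z (x + y) = br z x + br z y.
Proof. by case: HL => _ _ [H _] _ _; case: (H x y z I I I). Qed.
Lemma LR_alt x : br x x = 0.
Proof. by case: HL => _ _ _ [H _ _] _; apply: H. Qed.
Lemma LR_jac x y z : br x (br y z) + (br y (br z x) + br z (br x y)) = 0.
Proof. by case: HL => _ _ _ [_ H _] _; apply: H. Qed.
Lemma LR_ancD x a b : anc x (a + b) = anc x a + anc x b.
Proof. by case: HL => _ _ _ [_ _ H] _; case: (H x I). Qed.
Lemma LR_ancM x a b : anc x (a * b) = a * anc x b + anc x a * b.
Proof. by case: HL => _ _ _ [_ _ H] _; case: (H x I). Qed.
Lemma LR_ancZ x (r : R) a : anc x (r *: a) = r *: anc x a.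
Proof. by case: HL => _ _ _ [_ _ H] _; case: (H x I). Qed.
Lemma LR_ancDl x y a : anc (x + y) a = anc x a + anc y a.
Proof. by case: HL => _ _ _ _ [H _ _ _]; apply: H. Qed.
Lemma LR_ancZl b x a : anc (b *: x) a = b * anc x a.
Proof. by case: HL => _ _ _ _ [_ H _ _]; apply: H. Qed.
Lemma LR_ancbr x y a : anc (br x y) a = anc x (anc y a) - anc y (anc x a).
Proof. by case: HL => _ _ _ _ [_ _ H _]; apply: H. Qed.
Lemma LR_brZr x y a : br x (a *: y) = anc x a *: y + a *: br x y.
Proof. by case: HL => _ _ _ _ [_ _ _ H]; apply: H. Qed.

Lemma LR_br0r x : br x 0 = 0.
Proof. by apply: addr_self_eq0; rewrite -LR_brDr addr0. Qed.
Lemma LR_br0l x : br 0 x = 0.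
Proof. by apply: addr_self_eq0; rewrite -LR_brDl addr0. Qed.
Lemma LR_brNr x y : br x (- y) = - br x y.
Proof. by apply: (addrI (br x y)); rewrite -LR_brDr !subrr LR_br0r. Qed.
Lemma LR_brNl x y : br (- x) y = - br x y.
Proof. by apply: (addrI (br x y)); rewrite -LR_brDl !subrr LR_br0l. Qed.
Lemma LR_brC x y : br x y = - br y x.
Proof.
apply/eqP; rewrite -subr_eq0 opprK.
by have := LR_alt (x + y); rewrite LR_brDl !LR_brDr !LR_alt add0r addr0 => ->.
Qed.
Lemma LR_brZl x y a : br (a *: x) y = a *: br x y - anc y a *: x.
Proof. by rewrite LR_brC LR_brZr opprD addrC -scalerN -LR_brC. Qed.
Lemma LR_anc0 x : anc x 0 = 0.
Proof. by apply: addr_self_eq0; rewrite -LR_ancD addr0. Qed.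
Lemma LR_ancN x a : anc x (- a) = - anc x a.
Proof. by apply: (addrI (anc x a)); rewrite -LR_ancD !subrr LR_anc0. Qed.
Lemma LR_anc0l a : anc 0 a = 0.
Proof. by rewrite -(scale0r (0 : L)) LR_ancZl mul0r. Qed.
Lemma LR_ancNl x a : anc (- x) a = - anc x a.
Proof. by rewrite -scaleN1r LR_ancZl mulN1r. Qed.
Lemma LR_anc1 x : anc x 1 = 0.
Proof. by apply: addr_self_eq0; rewrite -[in RHS](mulr1 1) LR_ancM mulr1 mul1r. Qed.
Lemma LR_ancRA x (r : R) : anc x r%:A = 0.
Proof. by rewrite LR_ancZ LR_anc1 scaler0. Qed.
End LieRinehartTheory.

Section LieRinehartModuleTheory.
Variables (R : comNzRingType) (A : comAlgType R) (L M : lmodType A)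
  (br : L -> L -> L) (anc : L -> A -> A) (act : L -> M -> M).
Hypothesis HM : is_LRmodule (@memT L) (lmod_ops L) br anc (@memT M) (lmod_ops M) act.

Lemma LM_actDl x y m : act (x + y) m = act x m + act y m.
Proof. by case: HM => _ _ [H _ _] _ _; apply: H. Qed.
Lemma LM_actDr x m n : act x (m + n) = act x m + act x n.
Proof. by case: HM => _ _ [_ H _] _ _; apply: H. Qed.
Lemma LM_actbr x y m : act (br x y) m = act x (act y m) - act y (act x m).
Proof. by case: HM => _ _ [_ _ H] _ _; apply: H. Qed.
Lemma LM_actZl a x m : act (a *: x) m = a *: act x m.
Proof. by case: HM => _ _ _ H _; apply: H. Qed.
Lemma LM_actZr a x m : act x (a *: m) = anc x a *: m + a *: act x m.
Proof. by case: HM => _ _ _ _ H; apply: H. Qed.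
Lemma LM_act0l m : act 0 m = 0.
Proof. by rewrite -(scale0r (0 : L)) LM_actZl scale0r. Qed.
Lemma LM_act0r x : act x 0 = 0.
Proof. by apply: addr_self_eq0; rewrite -LM_actDr addr0. Qed.
Lemma LM_actNl x m : act (- x) m = - act x m.
Proof. by rewrite -scaleN1r LM_actZl scaleN1r. Qed.
Lemma LM_actNr x m : act x (- m) = - act x m.
Proof. by apply: (addrI (act x m)); rewrite -LM_actDr !subrr LM_act0r. Qed.
End LieRinehartModuleTheory.

Section LinearFunctionals.
Variables (R : comNzRingType) (A : comAlgType R) (N : lmodType A).

Section Laws.
Variables (f : N -> A).
Hypothesis hf : is_Alin f.

Lemma linf0 : f 0 = 0.
Proof. by apply: addr_self_eq0; have := hf 1 0 0; rewrite scale1r addr0 mul1r. Qed.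
Lemma linfD x y : f (x + y) = f x + f y.
Proof. by have := hf 1 x y; rewrite scale1r mul1r. Qed.
Lemma linfZ a x : f (a *: x) = a * f x.
Proof. by have := hf a x 0; rewrite addr0 linf0 addr0. Qed.
Lemma linfN x : f (- x) = - f x.
Proof. by rewrite -scaleN1r linfZ mulN1r. Qed.
Lemma linf_sum n (c : 'I_n -> A) (e : 'I_n -> N) :
  f (\sum_i c i *: e i) = \sum_i c i * f (e i).
Proof.
apply: (big_rec2 (fun v a => f v = a)); first exact: linf0.
by move=> i v a _ <-; rewrite linfD linfZ.
Qed.
End Laws.

Lemma is_Alin0 : is_Alin (fun _ : N => 0 : A).
Proof. by move=> a x y; rewrite mulr0 addr0. Qed.
Lemma is_AlinD (f g : N -> A) : is_Alin f -> is_Alin g -> is_Alin (fun n => f n + g n).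
Proof. by move=> hf hg a x y; rewrite hf hg; ring. Qed.
Lemma is_AlinB (f g : N -> A) : is_Alin f -> is_Alin g -> is_Alin (fun n => f n - g n).
Proof. by move=> hf hg a x y; rewrite hf hg; ring. Qed.
Lemma is_AlinN (f : N -> A) : is_Alin f -> is_Alin (fun n => - f n).
Proof. by move=> hf a x y; rewrite hf; ring. Qed.
Lemma is_AlinMl (f : N -> A) b : is_Alin f -> is_Alin (fun n => b * f n).
Proof. by move=> hf a x y; rewrite hf; ring. Qed.
Lemma is_Alin_sum n (a : 'I_n -> A) (c : 'I_n -> N -> A) (s : seq 'I_n) :
  (forall i, is_Alin (c i)) -> is_Alin (fun x => \sum_(i <- s) a i * c i x).
Proof.
move=> hc b x y; rewrite big_distrr -big_split /=; apply: eq_bigr => i _.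
by rewrite (hc i); ring.
Qed.
End LinearFunctionals.
Arguments is_Alin0 {R A N}.

Section FinitelyGeneratedProjective.
Variables (R : comNzRingType) (A : comAlgType R) (M : lmodType A).
Hypothesis HF : is_fgp (@memT M) (lmod_ops M).

Lemma fgp_basis : exists n (c : 'I_n -> M -> A) (e : 'I_n -> M),
  (forall i, is_Alin (c i)) /\ (forall x, x = \sum_i c i x *: e i).
Proof.
case: HF => n [s [r [_ hs hr hrs]]].
have r0 : r 0 = 0.
  by apply: addr_self_eq0; have := hr 1 0 0; rewrite scale1r addr0 /= scale1r => <-.
exists n, (fun i x => s x 0 i), (fun i => r 'e_i); split.
  by move=> i a x y; have := hs a x y I I; rewrite /= => ->; rewrite !mxE.
move=> x; rewrite -{1}(hrs x I) {1}(row_sum_delta (s x)).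
apply: (big_rec2 (fun v w => r v = w)) => // i v w _ <-.
by have := hr (s x 0 i) 'e_i v.
Qed.

Lemma fgp_linf_sep v : (forall w : M -> A, is_Alin w -> w v = 0) -> v = 0.
Proof.
move=> H; case: fgp_basis => n [c [e [hc he]]].
by rewrite (he v) big1 // => i _; rewrite H ?scale0r.
Qed.

Lemma fgp_linf_inj u v : (forall w : M -> A, is_Alin w -> w u = w v) -> u = v.
Proof.
move=> H; apply/eqP; rewrite -subr_eq0; apply/eqP; apply: fgp_linf_sep => w hw.
by rewrite (linfD hw) (linfN hw) (H w hw) subrr.
Qed.

(* [T x = \sum_i c_i x * T e_i] and [c_i x * T e_i = c_i (T e_i *: x) = 0]. *)
Lemma fgp_linf_annihilator (T : M -> A) :
  is_Alin T -> (forall x y : M, T x *: y = 0) -> forall x, T x = 0.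
Proof.
move=> hT H x; case: fgp_basis => n [c [e [hc he]]].
rewrite {1}(he x) (linf_sum hT) big1 // => i _.
by rewrite mulrC -(linfZ (hc i)) H (linf0 (hc i)).
Qed.
End FinitelyGeneratedProjective.

Section SemidirectModule.
Variables (R : comNzRingType) (A : comAlgType R) (M N : lmodType A).

Lemma sd_Amodule : is_Amodule (@sd_mem R A M N) (sd_ops M N).
Proof.
split.
- split.
  + exact: is_Alin0.
  + by move=> u v hu hv; apply: is_AlinD.
  + by move=> u hu; apply: is_AlinN.
  + by move=> a u hu; apply: is_AlinMl.
- by move=> [x f] [y g] [z h] _ _ _ /=; rewrite addrA; congr pair; funext; ring.
- by move=> [x f] [y g] _ _ /=; rewrite addrC; congr pair; funext; ring.
- by split=> [[x f] _ | [x f] _] /=; rewrite ?add0r ?addNr; congr pair; funext; ring.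
- split.
  + by move=> a b [x f] _ /=; rewrite scalerA; congr pair; funext; ring.
  + by move=> [x f] _ /=; rewrite scale1r; congr pair; funext; ring.
  + by move=> a [x f] [y g] _ _ /=; rewrite scalerDr; congr pair; funext; ring.
  + by move=> a b [x f] _ /=; rewrite scalerDl; congr pair; funext; ring.
Qed.
End SemidirectModule.

Section SemidirectLieRinehart.
Variables (R : comNzRingType) (A : comAlgType R) (M N : lmodType A)
  (brM : M -> M -> M) (ancM : M -> A -> A) (act : M -> N -> N).
Hypothesis HM : is_LieRinehart (@memT M) (lmod_ops M) brM ancM.
Hypothesis HA : is_LRmodule (@memT M) (lmod_ops M) brM ancM (@memT N) (lmod_ops N) act.

Lemma is_Alin_dual_act x f : is_Alin f -> is_Alin (dual_act ancM act x f).
Proof.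
move=> hf a n m; rewrite /dual_act (LM_actDr HA) (LM_actZr HA).
by rewrite !(linfD hf) !(linfZ hf) !(LR_ancD HM) (LR_ancM HM); ring.
Qed.

Lemma sd_LieRinehart : is_LieRinehart (@sd_mem R A M N) (sd_ops M N)
   (sd_br brM ancM act) (sd_anc ancM).
Proof.
split.
- exact: sd_Amodule.
- by move=> [x f] [y g] hf hg; apply: is_AlinB; apply: is_Alin_dual_act.
- split.
  + move=> [x f] [y g] [z h] _ _ hh; rewrite /sd_mem /= in hh.
    rewrite /sd_br /dual_act /= (LR_brDl HM) (LR_brDr HM); split; congr pair; funext;
      by rewrite (LR_ancDl HM) (LM_actDl HA) (linfD hh) !(LR_ancD HM); ring.
  + move=> r [x f] [y g] hf hg; rewrite /sd_mem /= in hf hg.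
    rewrite /sd_br /dual_act /= (LR_brZl HM) (LR_brZr HM) !(LR_ancRA HM) !scale0r.
    rewrite subr0 add0r; split; congr pair; funext;
      by rewrite (LR_ancZl HM) (LM_actZl HA) ?(linfZ hf) ?(linfZ hg) (LR_ancM HM)
        (LR_ancRA HM); ring.
- split.
  + by move=> [x f] _; rewrite /sd_br /= (LR_alt HM); congr pair; funext; rewrite subrr.
  + move=> [x f] [y g] [z h] hf hg hh; rewrite /sd_mem /= in hf hg hh.
    rewrite /sd_br /dual_act /= (LR_jac HM); congr pair; funext.
    rewrite !(LR_ancbr HM) !(LM_actbr HA) !(linfD hf) !(linfD hg) !(linfD hh).
    by rewrite !(linfN hf) !(linfN hg) !(linfN hh) !(LR_ancD HM, LR_ancN HM); ring.
  + move=> [x f] _; rewrite /sd_anc /=; split.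
    * exact: (LR_ancD HM).
    * exact: (LR_ancZ HM).
    * exact: (LR_ancM HM).
- split.
  + by move=> [x f] [y g] a _ _; rewrite /sd_anc /= (LR_ancDl HM).
  + by move=> b [x f] a _; rewrite /sd_anc /= (LR_ancZl HM).
  + by move=> [x f] [y g] a _ _; rewrite /sd_anc /= (LR_ancbr HM).
  + move=> [x f] [y g] a hf hg; rewrite /sd_mem /= in hf hg.
    rewrite /sd_br /sd_anc /dual_act /= (LR_brZr HM); congr pair; funext.
    by rewrite (LR_ancZl HM) (LM_actZl HA) (linfZ hf) (LR_ancM HM); ring.
Qed.
End SemidirectLieRinehart.

Section SemidirectFgp.
Variables (R : comNzRingType) (A : comAlgType R) (M N : lmodType A).
Hypothesis HFM : is_fgp (@memT M) (lmod_ops M).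
Hypothesis HFN : is_fgp (@memT N) (lmod_ops N).

(* [N^* ] is a retract of [A^n2] through evaluation on, and expansion along,
   a dual basis [(c, e)] of [N]. *)
Lemma sd_fgp : is_fgp (@sd_mem R A M N) (sd_ops M N).
Proof.
case: HFM => n1 [s1 [r1 [_ hs1 hr1 hrs1]]].
case: (fgp_basis HFN) => n2 [c [e [hc he]]].
exists (n1 + n2)%N, (fun u => row_mx (s1 u.1) (\row_i u.2 (e i))).
exists (fun v => (r1 (lsubmx v), fun n => \sum_i rsubmx v 0 i * c i n)); split.
- by move=> v; apply: is_Alin_sum.
- move=> a [x f] [y g] hf hg /=.
  rewrite scale_row_mx add_row_mx; have := hs1 a x y I I; rewrite /= => ->.
  by congr row_mx; apply/rowP => i; rewrite !mxE.
- move=> a v w /=; congr pair.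
  + by rewrite linearD linearZ /=; have := hr1 a (lsubmx v) (lsubmx w).
  + funext; rewrite linearD linearZ /= big_distrr -big_split /=.
    by apply: eq_bigr => i _; rewrite !mxE; ring.
- move=> [x f] hf; rewrite /sd_mem /= in hf *.
  rewrite row_mxKl row_mxKr hrs1 //; congr pair.
  funext; rewrite [in RHS](he n) (linf_sum hf).
  by apply: eq_bigr => i _; rewrite mxE mulrC.
Qed.
End SemidirectFgp.

Section SemidirectPairing.
Variables (R : comNzRingType) (A : comAlgType R) (M N : lmodType A).

Definition sd_linf (f : M * (N -> A) -> A) : Prop :=
  forall a u v, sd_mem u -> sd_mem v ->
    f (madd (sd_ops M N) (mscale (sd_ops M N) a u) v) = a * f u + f v.

Lemma sd_linf_split f x phi :
  sd_linf f -> is_Alin phi -> f (x, phi) = f (x, fun _ => 0) + f (0, phi).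
Proof.
move=> hf hphi; rewrite -[f (x, fun _ => 0)]mul1r.
rewrite -(hf 1 (x, fun _ => 0) (0, phi) is_Alin0 hphi) /=.
by rewrite scale1r addr0; congr (f (_, _)); funext; rewrite mulr0 add0r.
Qed.

Lemma sd_linf_sum f n (a : 'I_n -> A) (c : 'I_n -> N -> A) (s : seq 'I_n) :
    sd_linf f -> (forall i, is_Alin (c i)) ->
  f (0, fun x => \sum_(i <- s) a i * c i x) = \sum_(i <- s) a i * f (0, c i).
Proof.
move=> hf hc; elim: s => [|i s IH].
  rewrite big_nil (_ : (fun x => _) = fun _ => 0); last by funext; rewrite big_nil.
  apply: addr_self_eq0.
  rewrite -{1}[f _]mul1r -(hf 1 (0, fun _ => 0) (0, fun _ => 0) is_Alin0 is_Alin0) /=.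
  by rewrite scaler0 addr0; congr (f (_, _)); funext; rewrite mulr0 addr0.
rewrite big_cons -IH -(hf (a i) (0, c i) (0, _) (hc i) (is_Alin_sum a s hc)) /=.
rewrite scaler0 addr0.
by congr (f (_, _)); funext; rewrite big_cons.
Qed.

Hypothesis HFN : is_fgp (@memT N) (lmod_ops N).

(* The functional [f] is represented by [(\sum_i f (0, c i) *: e i, f (., 0))]
   for a dual basis [(c, e)] of [N]. *)
Lemma sd_pairing_dual : is_dual_pairing (@sd_mem R A M N) (sd_ops M N)
  (@sd_mem R A N M) (sd_ops N M) (@sd_pairing R A M N).
Proof.
split.
- move=> [xi psi] a [x phi] [y chi] hpsi _ _; rewrite /sd_mem /= in hpsi.
  by rewrite /sd_pairing /= hpsi; ring.
- move=> [xi psi] [eta om] a [x phi] _ _ hphi; rewrite /sd_mem /= in hphi.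
  by rewrite /sd_pairing /= hphi; ring.
- move=> [xi psi] [eta om] hpsi hom H; rewrite /sd_mem /= in hpsi hom.
  congr pair; last by funext; have := H (n, fun _ => 0) is_Alin0;
    rewrite /sd_pairing /= !addr0.
  apply: (fgp_linf_inj HFN) => w hw.
  by have := H (0, w) hw; rewrite /sd_pairing /= (linf0 hpsi) (linf0 hom) !add0r.
- move=> f hf; case: (fgp_basis HFN) => n [c [e [hc he]]].
  exists (\sum_i f (0, c i) *: e i, fun x => f (x, fun _ => 0)).
    move=> a x y /=; rewrite -(hf a (x, fun _ => 0) (y, fun _ => 0) is_Alin0 is_Alin0) /=.
    by congr (f (_, _)); funext; rewrite mulr0 addr0.
  move=> [x phi] hphi; rewrite /sd_pairing /sd_mem /= in hphi *.
  rewrite (sd_linf_split x hf hphi); congr (_ + _).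
  have eqphi : phi = fun x => \sum_(i <- index_enum 'I_n) phi (e i) * c i x.
    by funext; rewrite {1}(he n0) (linf_sum hphi); apply: eq_bigr => i _; ring.
  rewrite [in RHS]eqphi (sd_linf_sum _ _ hf hc) (linf_sum hphi).
  by apply: eq_bigr => i _; ring.
Qed.
End SemidirectPairing.

Section DirectSum.
Variables (R : comNzRingType) (A : comAlgType R) (L1 L2 : lmodType A).

Lemma sum_Amodule : is_Amodule (@memT (L1 * L2)) (sum_ops L1 L2).
Proof.
split.
- by [].
- by move=> [x xi] [y eta] [z zeta] _ _ _ /=; rewrite !addrA.
- by move=> [x xi] [y eta] _ _ /=; rewrite addrC [xi + _]addrC.
- by split=> [[x xi] _ | [x xi] _] /=; rewrite ?add0r ?addNr.
- split.
  + by move=> a b [x xi] _ /=; rewrite !scalerA.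
  + by move=> [x xi] _ /=; rewrite !scale1r.
  + by move=> a [x xi] [y eta] _ _ /=; rewrite !scalerDr.
  + by move=> a b [x xi] _ /=; rewrite !scalerDl.
Qed.
End DirectSum.

Section TwilledBialgebra.
Variables (R : comNzRingType) (A : comAlgType R) (L1 L2 : lmodType A)
    (br1 : L1 -> L1 -> L1) (anc1 : L1 -> A -> A)
    (br2 : L2 -> L2 -> L2) (anc2 : L2 -> A -> A)
    (act1 : L1 -> L2 -> L2) (act2 : L2 -> L1 -> L1).
Hypothesis HL1 : is_LieRinehart (@memT L1) (lmod_ops L1) br1 anc1.
Hypothesis HL2 : is_LieRinehart (@memT L2) (lmod_ops L2) br2 anc2.
Hypothesis HM1 :
  is_LRmodule (@memT L1) (lmod_ops L1) br1 anc1 (@memT L2) (lmod_ops L2) act1.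
Hypothesis HM2 :
  is_LRmodule (@memT L2) (lmod_ops L2) br2 anc2 (@memT L1) (lmod_ops L1) act2.
Hypothesis F1 : is_fgp (@memT L1) (lmod_ops L1).
Hypothesis F2 : is_fgp (@memT L2) (lmod_ops L2).

Local Notation memL := (@sd_mem R A L1 L2).
Local Notation memD := (@sd_mem R A L2 L1).
Local Notation brL := (sd_br br1 anc1 act1).
Local Notation ancL := (sd_anc (N:=L2) anc1).
Local Notation brD := (sd_br br2 anc2 act2).
Local Notation ancD := (sd_anc (N:=L1) anc2).
Local Notation pr := (@sd_pairing R A L1 L2).

Ltac simp_laws := rewrite ?(LR_brDl HL1, LR_brDr HL1, LR_brNl HL1, LR_brNr HL1,
  LR_br0l HL1, LR_br0r HL1, LR_brZl HL1, LR_brZr HL1, LR_alt HL1,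
  LR_ancD HL1, LR_ancN HL1, LR_anc0 HL1, LR_ancM HL1, LR_ancDl HL1,
  LR_ancNl HL1, LR_anc0l HL1, LR_ancZl HL1, LR_ancbr HL1, LR_ancZ HL1, LR_anc1 HL1,
  LR_brDl HL2, LR_brDr HL2, LR_brNl HL2, LR_brNr HL2,
  LR_br0l HL2, LR_br0r HL2, LR_brZl HL2, LR_brZr HL2, LR_alt HL2,
  LR_ancD HL2, LR_ancN HL2, LR_anc0 HL2, LR_ancM HL2, LR_ancDl HL2,
  LR_ancNl HL2, LR_anc0l HL2, LR_ancZl HL2, LR_ancbr HL2, LR_ancZ HL2, LR_anc1 HL2,
  LM_actDl HM1, LM_actDr HM1, LM_actNl HM1, LM_actNr HM1, LM_act0l HM1,
  LM_act0r HM1, LM_actZl HM1, LM_actZr HM1, LM_actbr HM1,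
  LM_actDl HM2, LM_actDr HM2, LM_actNl HM2, LM_actNr HM2, LM_act0l HM2,
  LM_act0r HM2, LM_actZl HM2, LM_actZr HM2, LM_actbr HM2,
  scale0r, scaler0, addr0, add0r, oppr0, subr0, sub0r, opprK).

Ltac norm := repeat (first [progress simp_laws |
   match goal with h : is_Alin ?f |- _ =>
      progress rewrite ?(linfD h, linfN h, linfZ h, linf0 h) end]).

Definition jacobiator1 x y xi : L1 :=
  act2 xi (br1 x y) - br1 x (act2 xi y) + br1 y (act2 xi x)
  + act2 (act1 x xi) y - act2 (act1 y xi) x.
Definition jacobiator2 xi eta x : L2 :=
  act1 x (br2 xi eta) - br2 xi (act1 x eta) + br2 eta (act1 x xi)
  + act1 (act2 xi x) eta - act1 (act2 eta x) xi.
Definition anchor_defect x xi a : A :=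
  anc1 x (anc2 xi a) - anc2 xi (anc1 x a) + anc1 (act2 xi x) a - anc2 (act1 x xi) a.

Definition mixed_jacobi1 := forall x y xi, jacobiator1 x y xi = 0.
Definition mixed_jacobi2 := forall xi eta x, jacobiator2 xi eta x = 0.
Definition mixed_anchor_morph := forall x xi a, anchor_defect x xi a = 0.

Definition sum_br (u v : L1 * L2) : L1 * L2 :=
  (br1 u.1 v.1 + act2 u.2 v.1 - act2 v.2 u.1, br2 u.2 v.2 + act1 u.1 v.2 - act1 v.1 u.2).
Definition sum_anc (u : L1 * L2) (a : A) : A := anc1 u.1 a + anc2 u.2 a.
Definition sum_jacobiator (X Y Z : L1 * L2) : L1 * L2 :=
  madd (sum_ops L1 L2) (sum_br X (sum_br Y Z))
    (madd (sum_ops L1 L2) (sum_br Y (sum_br Z X)) (sum_br Z (sum_br X Y))).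

Ltac split_components := rewrite /sum_br /sum_anc /=; congr pair;
  [apply: (fgp_linf_inj F1) => w hw | apply: (fgp_linf_inj F2) => w hw]; norm.

Lemma twilledE : twilled br1 anc1 br2 anc2 act1 act2 =
  is_LieRinehart (@memT (L1 * L2)) (sum_ops L1 L2) sum_br sum_anc.
Proof. by []. Qed.

Lemma jacobiator1x0 x y : jacobiator1 x y 0 = 0.
Proof. by rewrite /jacobiator1; norm. Qed.
Lemma jacobiator2x0 xi eta : jacobiator2 xi eta 0 = 0.
Proof. by rewrite /jacobiator2; norm. Qed.
Lemma anchor_defect0x xi a : anchor_defect 0 xi a = 0.
Proof. by rewrite /anchor_defect; norm. Qed.
Lemma anchor_defectx0 x xi : anchor_defect x xi 0 = 0.
Proof. by rewrite /anchor_defect; norm. Qed.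

Lemma sum_jacobiatorE x xi y eta z zeta :
  sum_jacobiator (x, xi) (y, eta) (z, zeta) =
  (br1 x (br1 y z) + (br1 y (br1 z x) + br1 z (br1 x y))
     + (jacobiator1 x y zeta + jacobiator1 y z xi + jacobiator1 z x eta),
   br2 xi (br2 eta zeta) + (br2 eta (br2 zeta xi) + br2 zeta (br2 xi eta))
     + (jacobiator2 xi eta z + jacobiator2 eta zeta x + jacobiator2 zeta xi y)).
Proof.
rewrite /sum_jacobiator /sum_br /jacobiator1 /jacobiator2 /=; congr pair.
- by apply: (fgp_linf_inj F1) => w hw; norm; ring.
- by apply: (fgp_linf_inj F2) => w hw; norm; ring.
Qed.

Lemma sum_anc_brE x xi y eta a :
  sum_anc (sum_br (x, xi) (y, eta)) a
  - (sum_anc (x, xi) (sum_anc (y, eta) a) - sum_anc (y, eta) (sum_anc (x, xi) a))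
  = anchor_defect y xi a - anchor_defect x eta a.
Proof. by rewrite /sum_anc /sum_br /anchor_defect /=; norm; ring. Qed.

Lemma twilled_mixed : twilled br1 anc1 br2 anc2 act1 act2 ->
  [/\ mixed_jacobi1, mixed_jacobi2 & mixed_anchor_morph].
Proof.
rewrite twilledE => -[_ _ _ [_ jac _] [_ _ hanc _]].
have jacE X Y Z : sum_jacobiator X Y Z = (0, 0) := jac X Y Z I I I.
split.
- move=> x y xi; move/(congr1 fst): (jacE (x, 0) (y, 0) (0, xi)).
  by rewrite sum_jacobiatorE /= !jacobiator1x0; norm.
- move=> xi eta x; move/(congr1 snd): (jacE (0, xi) (0, eta) (x, 0)).
  by rewrite sum_jacobiatorE /= !jacobiator2x0; norm.
- move=> x xi a; have := sum_anc_brE x 0 0 xi a.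
  by rewrite hanc // subrr anchor_defect0x sub0r => /eqP; rewrite eq_sym oppr_eq0 => /eqP.
Qed.

Lemma mixed_twilled : mixed_jacobi1 -> mixed_jacobi2 -> mixed_anchor_morph ->
  twilled br1 anc1 br2 anc2 act1 act2.
Proof.
move=> hJ1 hJ2 hanc; rewrite twilledE; split.
- exact: sum_Amodule.
- by [].
- split.
  + by move=> [x xi] [y eta] [z zeta] _ _ _; split; split_components; ring.
  + by move=> r [x xi] [y eta] _ _; split; split_components; ring.
- split.
  + by move=> [x xi] _; split_components; ring.
  + move=> [x xi] [y eta] [z zeta] _ _ _.
    change (sum_jacobiator (x, xi) (y, eta) (z, zeta) = (0, 0)).
    by rewrite sum_jacobiatorE !hJ1 !hJ2 (LR_jac HL1) (LR_jac HL2) !addr0.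
  + move=> [x xi] _; rewrite /sum_anc /=; split.
    * by move=> a b; norm; ring.
    * by move=> r a; norm; rewrite scalerDr.
    * by move=> a b; norm; ring.
- split.
  + by move=> [x xi] [y eta] a _ _; rewrite /sum_anc /=; norm; ring.
  + by move=> b [x xi] a _; rewrite /sum_anc /=; norm; ring.
  + move=> [x xi] [y eta] a _ _; apply/eqP; rewrite -subr_eq0.
    by rewrite sum_anc_brE !hanc subrr.
  + by move=> [x xi] [y eta] a _ _; split_components; ring.
Qed.

Lemma twilled_iff_mixed : twilled br1 anc1 br2 anc2 act1 act2 <->
  [/\ mixed_jacobi1, mixed_jacobi2 & mixed_anchor_morph].
Proof. by split=> [/twilled_mixed | [] /mixed_twilled]. Qed.

Definition sd_coad (Y : L1 * (L2 -> A)) (al : L2 * (L1 -> A)) : L2 * (L1 -> A) :=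
  (act1 Y.1 al.1, fun z => anc1 Y.1 (al.2 z) - al.2 (br1 Y.1 z)
                          + anc1 z (Y.2 al.1) - Y.2 (act1 z al.1)).

Lemma sd_coad_spec Y al : memL Y -> memD al ->
  memD (sd_coad Y al) /\
  forall x, memL x -> pr (sd_coad Y al) x = ancL Y (pr al x) - pr al (brL Y x).
Proof.
case: Y => y chi; case: al => xi psi; rewrite /sd_mem /= => hchi hpsi; split.
  by move=> a z w /=; norm; ring.
case=> z th; rewrite /sd_mem /= => hth.
by rewrite /sd_pairing /sd_anc /sd_br /dual_act /=; norm; ring.
Qed.

Lemma coad_sdE Y al : memL Y -> memD al -> coad memL memD brL ancL pr Y al = sd_coad Y al.
Proof.
move=> hY hal; rewrite /coad; set P := (fun ga => _).
have [coad_mem coad_pr] : P (epsilon (inhabits al) P).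
  by apply: epsilon_spec; exists (sd_coad Y al); exact: sd_coad_spec.
case: (sd_coad_spec hY hal) => sd_coad_mem sd_coad_pr.
case: (sd_pairing_dual L1 F2) => _ _ pr_inj _.
by apply: pr_inj => // x hx; rewrite coad_pr // sd_coad_pr.
Qed.

Definition compat_defect X Y al be : A :=
  dstar brD ancD pr (brL X Y) al be
  + gbr1 memL memD brL ancL pr Y (dstar brD ancD pr X) al be
  - gbr1 memL memD brL ancL pr X (dstar brD ancD pr Y) al be.

Definition mixed_defect x (chi : L2 -> A) xi eta : A :=
  chi (jacobiator2 xi eta x) + anchor_defect x eta (chi xi) - anchor_defect x xi (chi eta).

Lemma compat_defectE x phi y chi xi psi eta om :
    is_Alin phi -> is_Alin chi -> is_Alin psi -> is_Alin om ->
  compat_defect (x, phi) (y, chi) (xi, psi) (eta, om) =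
  om (jacobiator1 x y xi) - psi (jacobiator1 x y eta)
  + mixed_defect x chi xi eta - mixed_defect y phi xi eta.
Proof.
move=> hphi hchi hpsi hom; rewrite /compat_defect /gbr1 !coad_sdE //.
rewrite /dstar /sd_coad /sd_pairing /sd_br /sd_anc /dual_act /mixed_defect.
rewrite /jacobiator1 /jacobiator2 /anchor_defect /=; norm.
(* orient the brackets consistently, so that [ring] sees the cancellations *)
rewrite (LR_brC HL1 y x) (LR_brC HL2 (act1 y xi) eta) (LR_brC HL2 (act1 x xi) eta).
by norm; ring.
Qed.

Definition sd_compat :=
  forall X Y, memL X -> memL Y -> forall al be, memD al -> memD be ->
    compat_defect X Y al be = 0.

Lemma sd_bialgebraE :
  is_LR_bialgebra memL (sd_ops L1 L2) brL ancL memD (sd_ops L2 L1) brD ancD pr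
  <-> sd_compat.
Proof.
split=> [[_ _ _ _ compat] X Y hX hY al be hal hbe | compat].
  by rewrite /compat_defect compat //; ring.
split.
- exact: sd_LieRinehart.
- exact: sd_LieRinehart.
- by split; apply: sd_fgp.
- exact: sd_pairing_dual.
- move=> X Y hX hY al be hal hbe; apply/eqP; rewrite -subr_eq0; apply/eqP.
  by rewrite -(compat X Y hX hY al be hal hbe) /compat_defect; ring.
Qed.

Lemma mixed_defectx0 x xi eta : mixed_defect x (fun _ => 0) xi eta = 0.
Proof. by rewrite /mixed_defect /= !anchor_defectx0 addr0 subr0. Qed.

Lemma mixed_defect0x chi xi eta : is_Alin chi -> mixed_defect 0 chi xi eta = 0.
Proof.
move=> hchi; rewrite /mixed_defect jacobiator2x0 (linf0 hchi).
by rewrite !anchor_defect0x addr0 subr0.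
Qed.

Lemma sd_compat_jacobi1 : sd_compat -> mixed_jacobi1.
Proof.
move=> compat x y xi; apply: (fgp_linf_sep F1) => om hom.
have := compat (x, fun _ => 0) (y, fun _ => 0) is_Alin0 is_Alin0
  (xi, fun _ => 0) (0, om) is_Alin0 hom.
rewrite (compat_defectE x y xi 0 is_Alin0 is_Alin0 is_Alin0 hom) /= !mixed_defectx0.
by rewrite subr0 addr0 subr0.
Qed.

Lemma sd_compat_mixed_defect : sd_compat ->
  forall x chi xi eta, is_Alin chi -> mixed_defect x chi xi eta = 0.
Proof.
move=> compat x chi xi eta hchi.
have := compat (x, fun _ => 0) (0, chi) is_Alin0 hchi
  (xi, fun _ => 0) (eta, fun _ => 0) is_Alin0 is_Alin0.
rewrite (compat_defectE x 0 xi eta is_Alin0 hchi is_Alin0 is_Alin0) /=.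
by rewrite (mixed_defect0x xi eta is_Alin0) subrr add0r subr0.
Qed.

Lemma jacobiator1Z x y xi b :
  jacobiator1 x (b *: y) xi = b *: jacobiator1 x y xi - anchor_defect x xi b *: y.
Proof.
by apply: (fgp_linf_inj F1) => w hw; rewrite /jacobiator1 /anchor_defect; norm; ring.
Qed.

Lemma mixed_jacobi1_anchor_morph : mixed_jacobi1 -> mixed_anchor_morph.
Proof.
move=> hJ1 x xi b.
have lin : is_Alin (fun x => anchor_defect x xi b).
  by move=> a x1 x2; rewrite /anchor_defect; norm; ring.
apply: (fgp_linf_annihilator F1 lin) => {}x y.
have := jacobiator1Z x y xi b; rewrite !hJ1 scaler0 sub0r.
by move/eqP; rewrite eq_sym oppr_eq0 => /eqP.
Qed.

Lemma mixed_defect_jacobi2 : mixed_anchor_morph ->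
  (forall x chi xi eta, is_Alin chi -> mixed_defect x chi xi eta = 0) -> mixed_jacobi2.
Proof.
move=> hanc hK xi eta x; apply: (fgp_linf_sep F2) => chi hchi.
by have := hK x chi xi eta hchi; rewrite /mixed_defect !hanc addr0 subr0.
Qed.

Lemma sd_compat_iff_mixed :
  sd_compat <-> [/\ mixed_jacobi1, mixed_jacobi2 & mixed_anchor_morph].
Proof.
split=> [compat | [hJ1 hJ2 hanc]].
  have hJ1 := sd_compat_jacobi1 compat.
  have hanc := mixed_jacobi1_anchor_morph hJ1.
  by split=> //; apply: mixed_defect_jacobi2 (sd_compat_mixed_defect compat).
move=> [x phi] [y chi] hphi hchi [xi psi] [eta om] hpsi hom.
rewrite /sd_mem /= in hphi hchi hpsi hom.
by rewrite compat_defectE // /mixed_defect !hJ1 !hJ2 !hanc; norm.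
Qed.

Lemma twilled_iff_sd_bialgebra : twilled br1 anc1 br2 anc2 act1 act2 <->
  is_LR_bialgebra memL (sd_ops L1 L2) brL ancL memD (sd_ops L2 L1) brD ancD pr.
Proof. by rewrite twilled_iff_mixed sd_bialgebraE sd_compat_iff_mixed. Qed.
End TwilledBialgebra.

Unset Implicit Arguments.

Theorem corollary4p9 (R : comNzRingType) (A : comAlgType R) (L1 L2 : lmodType A)
    (br1 : L1 -> L1 -> L1) (anc1 : L1 -> A -> A)
    (br2 : L2 -> L2 -> L2) (anc2 : L2 -> A -> A)
    (act1 : L1 -> L2 -> L2) (act2 : L2 -> L1 -> L1) :
  (exists u : R, 2%:R * u = 1) -> (exists u : R, 3%:R * u = 1) ->
  almost_twilled br1 anc1 br2 anc2 act1 act2 ->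
  is_fgp (@memT L1) (lmod_ops L1) -> is_fgp (@memT L2) (lmod_ops L2) ->
  (twilled br1 anc1 br2 anc2 act1 act2 <->
   is_LR_bialgebra
     (@sd_mem R A L1 L2) (sd_ops L1 L2) (sd_br br1 anc1 act1) (sd_anc (N:=L2) anc1)
     (@sd_mem R A L2 L1) (sd_ops L2 L1) (sd_br br2 anc2 act2) (sd_anc (N:=L1) anc2)
     (@sd_pairing R A L1 L2)).
Proof.
move=> _ _ [HL1 HL2 HM1 HM2] F1 F2.
exact: twilled_iff_sd_bialgebra.
Qed.
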